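(* Let $Q$ be a multiplicative graph. Every $k$-face of a product $n$-cube of $Q$ is a product $k$-cube of $Q$.
   Context: Graphs are directed graphs $(V\overset{s}{\underset{t}{\leftleftarrows}}A)$, possibly with loops and multiple edges; the Cartesian product $Q_1\,\square\,Q_2$ has vertex set $V_1\times V_2$, arrows $A_1\times V_2\sqcup V_1\times A_2$, source $s_1\times\mathrm{id}\sqcup\mathrm{id}\times s_2$, target $t_1\times\mathrm{id}\sqcup\mathrm{id}\times t_2$; this product is associative up to canonical isomorphism. A multiplicative graph is a graph $Q$ with a morphism $\mu:Q\,\square\,Q\to Q$ such that $\mu\circ(\mu\,\square\,\mathrm{id})=\mu\circ(\mathrm{id}\,\square\,\mu)$; let $\mu_n:Q^{\square n}\to Q$ denote the iterated multiplication. Let $\mathrm{Q}_1$ be the graph with two vertices and one arrow between them, and $\mathrm{Q}_n=\mathrm{Q}_1\,\square\cdots\square\,\mathrm{Q}_1$ ($n$ factors). A $k$-face of $\mathrm{Q}_n$ is the subgraph (isomorphic to $\mathrm{Q}_k$) obtained by replacing $n-k$ of the factors $\mathrm{Q}_1$ by one of its vertices. An $n$-cube of $Q$ is a graph morphism $\mathrm{Q}_n\to Q$, and its $k$-faces are its restrictions to the $k$-faces of $\mathrm{Q}_n$. Each arrow $a$ of $Q$ gives a morphism $a:\mathrm{Q}_1\to Q$. A product $n$-cube is an $n$-cube of the form $\mu_n\circ(a_1\,\square\cdots\square\,a_n):\mathrm{Q}_n\to Q$ for arrows $a_1,\dots,a_n$ of $Q$. *)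

From HB Require Import structures.
From mathcomp Require Import all_boot.
Set Implicit Arguments. Unset Strict Implicit. Unset Printing Implicit Defensive.

Record graph := Graph { vert : Type; arr : Type;
  src : arr -> vert; tgt : arr -> vert }.

Record gmorph (G H : graph) := GMorph {
  mv : vert G -> vert H;
  ma : arr G -> arr H;
  mv_src : forall a, src (ma a) = mv (src a);
  mv_tgt : forall a, tgt (ma a) = mv (tgt a) }.

Definition gprod (G H : graph) : graph :=
  @Graph (vert G * vert H)%type ((arr G * vert H) + (vert G * arr H))%type
    (fun e => match e with inl (a, y) => (src a, y) | inr (x, b) => (x, src b) end)
    (fun e => match e with inl (a, y) => (tgt a, y) | inr (x, b) => (x, tgt b) end).

(* Multiplicative graph: mu : Q [] Q -> Q with mu o (mu [] id) = mu o (id [] mu)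
   (modulo the canonical isomorphism (Q[]Q)[]Q ~ Q[](Q[]Q)), written out on
   vertices and on the three kinds of arrows of the triple product. *)
Record mgraph := MGraph {
  mcarrier :> graph;
  mu : gmorph (gprod mcarrier mcarrier) mcarrier;
  mu_assocV : forall x y z : vert mcarrier,
    mv mu (mv mu (x, y), z) = mv mu (x, mv mu (y, z));
  mu_assocA1 : forall (a : arr mcarrier) (y z : vert mcarrier),
    ma mu (inl (ma mu (inl (a, y)), z)) = ma mu (inl (a, mv mu (y, z)));
  mu_assocA2 : forall (x : vert mcarrier) (b : arr mcarrier) (z : vert mcarrier),
    ma mu (inl (ma mu (inr (x, b)), z)) = ma mu (inr (x, ma mu (inl (b, z))));
  mu_assocA3 : forall (x y : vert mcarrier) (c : arr mcarrier),
    ma mu (inr (mv mu (x, y), c)) = ma mu (inr (x, ma mu (inr (y, c)))) }.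

(* The cube graph Q_(m+1) = Q_1 [] ... [] Q_1 (m+1 factors), in flat form:
   vertices are {0,1}-valued functions on the m+1 factors; an arrow is a pair
   (i, w): the arrow of Q_1 in factor i, and the vertices w of the other m
   factors (indexed through [lift i]). *)
Definition Qcube (m : nat) : graph :=
  @Graph {ffun 'I_m.+1 -> bool} ('I_m.+1 * {ffun 'I_m -> bool})%type
    (fun e => [ffun j => if unlift e.1 j is Some j' then e.2 j' else false])
    (fun e => [ffun j => if unlift e.1 j is Some j' then e.2 j' else true]).

Definition cube (Q : graph) (m : nat) := gmorph (Qcube m) Q.

(* A (k+1)-face of Q_(n+1) is given by the strictly increasing map
   sigma : 'I_(k+1) -> 'I_(n+1) listing the factors that are kept (in order),
   and by values x j for the remaining factors (values of x on the kept
   factors are irrelevant).  faceV/faceA is the inclusion of Q_(k+1),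
   identified with the face via the order-preserving identification of
   factors. *)
Definition faceV (k n : nat) (sigma : 'I_k.+1 -> 'I_n.+1)
    (x : {ffun 'I_n.+1 -> bool}) (v : {ffun 'I_k.+1 -> bool})
    : {ffun 'I_n.+1 -> bool} :=
  [ffun j => if [pick i | sigma i == j] is Some i then v i else x j].

Definition faceA (k n : nat) (sigma : 'I_k.+1 -> 'I_n.+1)
    (x : {ffun 'I_n.+1 -> bool}) (e : arr (Qcube k)) : arr (Qcube n) :=
  (sigma e.1, [ffun j' => faceV sigma x (src e) (lift (sigma e.1) j')]).

Definition restrV (Q : graph) (n k : nat) (c : cube Q n)
    (sigma : 'I_k.+1 -> 'I_n.+1) (x : {ffun 'I_n.+1 -> bool}) :=
  fun v => mv c (faceV sigma x v).
Definition restrA (Q : graph) (n k : nat) (c : cube Q n)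
    (sigma : 'I_k.+1 -> 'I_n.+1) (x : {ffun 'I_n.+1 -> bool}) :=
  fun e => ma c (faceA sigma x e).

Section Iterated.
Variable Q : mgraph.

(* Iterated multiplication mu_n = mu o (mu_(n-1) [] id), mu_1 = id, on the
   left-nested product Q^[]n: on vertices (x, s) = (x_1,...,x_n) ... *)
Definition muVs (x : vert Q) (s : seq (vert Q)) : vert Q :=
  foldl (fun u y => mv (mu Q) (u, y)) x s.

(* ... and on the arrow (l, alpha, r) = (x_1,..,x_(i-1), alpha, x_(i+1),..,x_n). *)
Definition muAs (l : seq (vert Q)) (alpha : arr Q) (r : seq (vert Q)) : arr Q :=
  foldl (fun beta y => ma (mu Q) (inl (beta, y)))
    (if l is x :: l' then ma (mu Q) (inr (muVs x l', alpha)) else alpha) r.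

(* The product (n+1)-cube mu_(n+1) o (a_0 [] ... [] a_n), for arrows
   a : 'I_(n+1) -> arr Q. *)
Definition pvtx (n : nat) (a : 'I_n.+1 -> arr Q) (v : {ffun 'I_n.+1 -> bool})
    (j : 'I_n.+1) : vert Q :=
  if v j then tgt (a j) else src (a j).

Definition prodV (n : nat) (a : 'I_n.+1 -> arr Q) (v : vert (Qcube n)) : vert Q :=
  let s := [seq pvtx a v j | j <- enum 'I_n.+1] in
  muVs (head (pvtx a v ord0) s) (behead s).

Definition prodA (n : nat) (a : 'I_n.+1 -> arr Q) (e : arr (Qcube n)) : arr Q :=
  let v := src e in
  muAs [seq pvtx a v j | j <- [seq j : 'I_n.+1 <- enum 'I_n.+1 | (nat_of_ord j < nat_of_ord e.1)%N]] (a e.1)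
       [seq pvtx a v j | j <- [seq j : 'I_n.+1 <- enum 'I_n.+1 | (nat_of_ord e.1 < nat_of_ord j)%N]].

Definition is_product_cube (n : nat) (c : cube Q n) : Prop :=
  exists a : 'I_n.+1 -> arr Q,
    (forall v, mv c v = prodV a v) /\ (forall e, ma c e = prodA a e).

Definition is_product_cube_maps (k : nat) (fV : vert (Qcube k) -> vert Q)
    (fA : arr (Qcube k) -> arr Q) : Prop :=
  exists b : 'I_k.+1 -> arr Q,
    (forall v, fV v = prodV b v) /\ (forall e, fA e = prodA b e).

End Iterated.

From mathcomp Require Import all_boot zify.
Set Implicit Arguments. Unset Strict Implicit. Unset Printing Implicit Defensive.

(* Cut the factors 0..n of Q_(n+1) into k+1 consecutive blocks, the i-th one
   containing exactly one kept factor [sigma i] (the first block also absorbs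
   the factors before [sigma 0]).  By generalized associativity, mu_(n+1) can
   be evaluated block by block; on the face, the product over the i-th block is
   the product of [a (sigma i)] with the fixed vertices [x j] of that block, so
   the face is the product cube of these k+1 arrows. *)

Lemma iota_subn_cat a b c :
  a <= b -> b <= c -> iota a (c - a) = iota a (b - a) ++ iota b (c - b).
Proof.
move=> le_ab le_bc; have -> : c - a = (b - a) + (c - b) by lia.
by rewrite iotaD subnKC.
Qed.

Lemma filter_iota0_gtn m N :
  m < N -> [seq j <- iota 0 N | m < j] = iota m.+1 (N - m.+1).
Proof.
move=> lt_mN; rewrite -[N in iota 0 N]subn0 (iota_subn_cat (b := m.+1)) // filter_cat.
rewrite (eq_in_filter (a2 := pred0)) ?filter_pred0; last first.
  by move=> j; rewrite mem_iota /=; lia.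
by apply/all_filterP/allP => j; rewrite mem_iota; lia.
Qed.

Section GeneralizedAssociativity.
Variable Q : mgraph.

Definition mulAr (b : arr Q) (r : seq (vert Q)) : arr Q :=
  foldl (fun beta y => ma (mu Q) (inl (beta, y))) b r.

(* The junk value [d] is only used for the empty list. *)
Definition vprod (d : vert Q) (s : seq (vert Q)) : vert Q :=
  muVs (head d s) (behead s).

Lemma muAsE l (al : arr Q) r :
  muAs l al r = mulAr (if l is x :: l' then ma (mu Q) (inr (muVs x l', al)) else al) r.
Proof. by []. Qed.

Lemma mu_muVs u y s : mv (mu Q) (u, muVs y s) = muVs (mv (mu Q) (u, y)) s.
Proof. by elim: s y => [|z s IHs] y //=; rewrite IHs mu_assocV. Qed.

Lemma mu_inl_muVs b y s :
  ma (mu Q) (inl (b, muVs y s)) = mulAr (ma (mu Q) (inl (b, y))) s.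
Proof. by elim: s y => [|z s IHs] y //=; rewrite IHs mu_assocA1. Qed.

Lemma mu_inr_mulAr u b r :
  ma (mu Q) (inr (u, mulAr b r)) = mulAr (ma (mu Q) (inr (u, b))) r.
Proof. by elim: r b => [|y r IHr] b //=; rewrite IHr -mu_assocA2. Qed.

Lemma mu_inr_muAs u l (al : arr Q) r :
  ma (mu Q) (inr (u, muAs l al r)) = muAs (u :: l) al r.
Proof.
rewrite !muAsE mu_inr_mulAr; case: l => [|x l] //=.
by rewrite -mu_assocA3 mu_muVs.
Qed.

Lemma muAs_cons_muVs x s l (al : arr Q) r :
  muAs (muVs x s :: l) al r = muAs (x :: s ++ l) al r.
Proof. by rewrite !muAsE /muVs foldl_cat. Qed.

Lemma src_mulAr b r : src (mulAr b r) = muVs (src b) r.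
Proof. by elim: r b => [|y r IHr] b //=; rewrite IHr mv_src. Qed.

Lemma tgt_mulAr b r : tgt (mulAr b r) = muVs (tgt b) r.
Proof. by elim: r b => [|y r IHr] b //=; rewrite IHr mv_tgt. Qed.

Lemma src_muAs d l (al : arr Q) r : src (muAs l al r) = vprod d (l ++ src al :: r).
Proof.
rewrite muAsE src_mulAr; case: l => [|x l] //=.
by rewrite mv_src /vprod /= /muVs foldl_cat.
Qed.

Lemma tgt_muAs d l (al : arr Q) r : tgt (muAs l al r) = vprod d (l ++ tgt al :: r).
Proof.
rewrite muAsE tgt_mulAr; case: l => [|x l] //=.
by rewrite mv_tgt /vprod /= /muVs foldl_cat.
Qed.

Lemma vprod_default d d' s : 0 < size s -> vprod d s = vprod d' s.
Proof. by case: s. Qed.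

Variable d : vert Q.

Lemma muVs_flatten u Ls :
  all (fun s => 0 < size s) Ls -> muVs u (map (vprod d) Ls) = muVs u (flatten Ls).
Proof.
elim: Ls u => [|[|y s] Ls IHLs] u //= nLs.
by rewrite /vprod /= mu_muVs IHLs // /muVs foldl_cat.
Qed.

Lemma vprod_flatten Ls : 0 < size Ls -> all (fun s => 0 < size s) Ls ->
  vprod d (map (vprod d) Ls) = vprod d (flatten Ls).
Proof.
case: Ls => [|[|y s] Ls] //= _ nLs.
by rewrite /vprod /= muVs_flatten // /muVs foldl_cat.
Qed.

Lemma mulAr_flatten b Rs :
  all (fun s => 0 < size s) Rs -> mulAr b (map (vprod d) Rs) = mulAr b (flatten Rs).
Proof.
elim: Rs b => [|[|y s] Rs IHRs] b //= nRs.
by rewrite IHRs // /vprod /= mu_inl_muVs /mulAr foldl_cat.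
Qed.

Lemma muAs_flatten Ls Rs l (al : arr Q) r :
  all (fun s => 0 < size s) Ls -> all (fun s => 0 < size s) Rs ->
  muAs (map (vprod d) Ls) (muAs l al r) (map (vprod d) Rs) =
  muAs (flatten Ls ++ l) al (r ++ flatten Rs).
Proof.
move=> nLs nRs; rewrite muAsE mulAr_flatten // [RHS]muAsE /mulAr foldl_cat.
congr foldl; rewrite -!/(mulAr _ _) -muAsE.
case: Ls nLs => [|[|y s] Ls] //= nLs.
by rewrite mu_inr_muAs muVs_flatten // muAs_cons_muVs -catA muAs_cons_muVs.
Qed.

End GeneralizedAssociativity.

Section Faces.
Variables (n k : nat) (sigma : 'I_k.+1 -> 'I_n.+1).

Lemma faceV_notin x v (j : 'I_n.+1) :
  (forall i, sigma i != j) -> faceV sigma x v j = x j.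
Proof.
by move=> notin; rewrite ffunE; case: pickP => // i /eqP eq_ij; case/eqP: (notin i).
Qed.

Hypothesis sigma_inj : injective sigma.

Lemma faceV_sigma x v i : faceV sigma x v (sigma i) = v i.
Proof.
rewrite ffunE; case: pickP => [i' /eqP/sigma_inj -> //|].
by move/(_ i); rewrite eqxx.
Qed.

Lemma src_faceA x e : src (faceA sigma x e) = faceV sigma x (src e).
Proof.
apply/ffunP => j; rewrite ffunE /=; case: unliftP => [j'|] ->; first by rewrite ffunE.
by rewrite faceV_sigma ffunE unlift_none.
Qed.

End Faces.

Lemma map_filter_enum_ord T m (f : 'I_m.+1 -> T) (P : pred nat) :
  [seq f j | j <- [seq j : 'I_m.+1 <- enum 'I_m.+1 | P (nat_of_ord j)]] =
  [seq f (inord j) | j <- [seq j <- iota 0 m.+1 | P j]].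
Proof.
by rewrite -val_enum_ord filter_map -map_comp; apply: eq_map => j /=; rewrite inord_val.
Qed.

Section ProductCubes.
Variables (Q : mgraph) (n : nat) (a : 'I_n.+1 -> arr Q).

Local Notation pvtx_at w := (fun j : nat => pvtx a w (inord j)).

Lemma prodV_iota d v : prodV a v = vprod d (map (pvtx_at v) (iota 0 n.+1)).
Proof.
rewrite /prodV -/(vprod _ _) (vprod_default _ d); last by rewrite size_map size_enum_ord.
by rewrite -val_enum_ord -map_comp; congr vprod; apply: eq_map => j /=; rewrite inord_val.
Qed.

Lemma prodA_iota e : prodA a e =
  muAs (map (pvtx_at (src e)) (iota 0 e.1)) (a e.1)
       (map (pvtx_at (src e)) (iota e.1.+1 (n - e.1))).
Proof.
rewrite /prodA (map_filter_enum_ord _ (fun j => j < e.1)).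
rewrite (map_filter_enum_ord _ (fun j => e.1 < j)) filter_iota0_gtn // subSS.
by have := @filter_iota_ltn 0 n.+1 e.1 (ltnW (ltn_ord e.1)); rewrite add0n => ->.
Qed.

End ProductCubes.

Section Blocks.
Variables (n k : nat) (sigma : 'I_k.+1 -> 'I_n.+1).
Hypothesis sigma_incr : forall i j : 'I_k.+1, i < j -> sigma i < sigma j.

(* The value [n.+1] beyond [k] makes the last block end at [n]. *)
Definition sigma_nat (i : nat) : nat :=
  if i <= k then nat_of_ord (sigma (inord i)) else n.+1.

Definition block_start (i : nat) : nat := if i == 0 then 0 else sigma_nat i.
Definition block (i : nat) : seq nat :=
  iota (block_start i) (block_start i.+1 - block_start i).
Definition fixed_before (i : nat) : seq nat :=
  iota (block_start i) (sigma_nat i - block_start i).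
Definition fixed_after (i : nat) : seq nat :=
  iota (sigma_nat i).+1 (block_start i.+1 - (sigma_nat i).+1).

Lemma sigma_natE (i : 'I_k.+1) : sigma_nat i = sigma i.
Proof. by rewrite /sigma_nat -ltnS ltn_ord inord_val. Qed.

Lemma sigma_nat_max : sigma_nat k.+1 = n.+1.
Proof. by rewrite /sigma_nat ltnn. Qed.

Lemma sigma_nat_lt i j : i < j -> j <= k.+1 -> sigma_nat i < sigma_nat j.
Proof.
move=> lt_ij le_jk; rewrite /sigma_nat ifT; last by lia.
case: ifP => [le_jk'|_]; last exact: ltn_ord.
by apply: sigma_incr; rewrite !inordK //; lia.
Qed.

Lemma sigma_nat_le i j : i <= j -> j <= k.+1 -> sigma_nat i <= sigma_nat j.
Proof.
rewrite leq_eqVlt => /orP[/eqP -> //|lt_ij le_jk].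
exact/ltnW/sigma_nat_lt.
Qed.

Lemma block_start0 : block_start 0 = 0.
Proof. by []. Qed.

Lemma block_startS i : block_start i.+1 = sigma_nat i.+1.
Proof. by []. Qed.

Lemma block_start_le i : block_start i <= sigma_nat i.
Proof. by rewrite /block_start; case: ifP. Qed.

Lemma block_start_mono i j : i <= j -> j <= k.+1 -> block_start i <= block_start j.
Proof.
move=> le_ij le_jk; rewrite /block_start; case: ifP => // /negbT i_gt0.
by rewrite ifF; [apply: sigma_nat_le | lia].
Qed.

Lemma blockE i : i <= k -> block i = fixed_before i ++ sigma_nat i :: fixed_after i.
Proof.
move=> le_ik; have lt_ii1 : sigma_nat i < block_start i.+1 by apply: sigma_nat_lt.
rewrite /block (iota_subn_cat (block_start_le i) (ltnW lt_ii1)).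
have -> : block_start i.+1 - sigma_nat i = (block_start i.+1 - (sigma_nat i).+1).+1.
  by lia.
by [].
Qed.

Lemma iota_fixed_before i :
  iota 0 (block_start i) ++ fixed_before i = iota 0 (sigma_nat i).
Proof.
by rewrite -[in LHS](subn0 (block_start i)) -iota_subn_cat ?block_start_le ?subn0.
Qed.

Lemma iota_fixed_after i : i <= k ->
  fixed_after i ++ iota (block_start i.+1) (block_start k.+1 - block_start i.+1) =
  iota (sigma_nat i).+1 (n - sigma_nat i).
Proof.
move=> le_ik; rewrite -iota_subn_cat ?block_startS ?sigma_nat_max ?subSS //.
- exact: sigma_nat_lt.
- by rewrite -sigma_nat_max; apply: sigma_nat_le.
Qed.

Lemma flatten_blocks m d : m + d <= k.+1 ->
  flatten (map block (iota m d)) =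
  iota (block_start m) (block_start (m + d) - block_start m).
Proof.
elim: d => [|d IHd] le_mdk; first by rewrite addn0 subnn.
rewrite -addn1 iotaD map_cat flatten_cat IHd; last by lia.
rewrite /= cats0 /block addn1 addnS -iota_subn_cat //; apply: block_start_mono; lia.
Qed.

Lemma block_notin i j : i <= k ->
  block_start i <= j < block_start i.+1 -> j != sigma_nat i ->
  forall i' : 'I_k.+1, sigma i' != inord j.
Proof.
move=> le_ik /andP[ge_j]; rewrite block_startS => lt_j ne_j i'.
have lt_jn : j < n.+1.
  by have := @sigma_nat_le i.+1 k.+1 le_ik (leqnn _); rewrite sigma_nat_max; lia.
apply/negP => /eqP/(congr1 (@nat_of_ord _)); rewrite inordK // -sigma_natE => eq_j.
case: (ltngtP i' i) => [lt_i'i|lt_ii'|eq_i'i].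
- have := sigma_nat_lt lt_i'i (leqW le_ik).
  by move: ge_j; rewrite /block_start ifF; lia.
- have := sigma_nat_le lt_ii' (leqW (ltn_ord i')); lia.
- by move: ne_j; rewrite -eq_j eq_i'i eqxx.
Qed.

Lemma faceV_fixed_before x v i j : i <= k ->
  j \in fixed_before i -> faceV sigma x v (inord j) = x (inord j).
Proof.
move=> le_ik; have lt_i_i1 : sigma_nat i < block_start i.+1 by apply: sigma_nat_lt.
rewrite mem_iota subnKC ?block_start_le // => range_j.
by apply: faceV_notin; apply: (block_notin le_ik); lia.
Qed.

Lemma faceV_fixed_after x v i j : i <= k ->
  j \in fixed_after i -> faceV sigma x v (inord j) = x (inord j).
Proof.
move=> le_ik; have lt_i_i1 : sigma_nat i < block_start i.+1 by apply: sigma_nat_lt.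
have := block_start_le i; rewrite mem_iota subnKC // => le_start range_j.
by apply: faceV_notin; apply: (block_notin le_ik); lia.
Qed.

Lemma sigma_inj : injective sigma.
Proof.
move=> i j eq_ij; apply/val_inj/eqP; case: ltngtP => // /sigma_incr.
all: by rewrite eq_ij ltnn.
Qed.

Lemma block_nonempty i : i <= k -> 0 < size (block i).
Proof. by move=> le_ik; rewrite blockE // size_cat /= addnS. Qed.

Lemma flatten_all_blocks : flatten (map block (iota 0 k.+1)) = iota 0 n.+1.
Proof. by rewrite flatten_blocks // add0n block_startS sigma_nat_max. Qed.

Section ProductFace.
Variables (Q : mgraph) (a : 'I_n.+1 -> arr Q) (x : {ffun 'I_n.+1 -> bool}).

Local Notation pvtx_at w := (fun j : nat => pvtx a w (inord j)).

Definition face_arrow (i : 'I_k.+1) : arr Q :=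
  muAs (map (pvtx_at x) (fixed_before i)) (a (sigma i)) (map (pvtx_at x) (fixed_after i)).

Lemma face_arrowE v i : face_arrow i =
  muAs (map (pvtx_at (faceV sigma x v)) (fixed_before i)) (a (sigma i))
       (map (pvtx_at (faceV sigma x v)) (fixed_after i)).
Proof.
have le_ik : i <= k by rewrite -ltnS.
congr muAs; apply/eq_in_map => j fixed_j.
  by rewrite /pvtx (faceV_fixed_before x v le_ik fixed_j).
by rewrite /pvtx (faceV_fixed_after x v le_ik fixed_j).
Qed.

Lemma pvtx_face_arrow d v (i : 'I_k.+1) :
  pvtx face_arrow v i = vprod d (map (pvtx_at (faceV sigma x v)) (block i)).
Proof.
have le_ik : i <= k by rewrite -ltnS.
rewrite (blockE le_ik) map_cat [map _ (sigma_nat i :: _)]/= sigma_natE inord_val.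
rewrite {3}/pvtx (faceV_sigma sigma_inj x v i) {1}/pvtx (face_arrowE v i).
by case: (v i); [apply: tgt_muAs | apply: src_muAs].
Qed.

Lemma map_pvtx_face_arrow d v m r : m + r <= k.+1 ->
  map (fun j => pvtx face_arrow v (inord j)) (iota m r) =
  map (vprod d) (map (map (pvtx_at (faceV sigma x v))) (map block (iota m r))).
Proof.
move=> le_mrk; rewrite -!map_comp; apply/eq_in_map => j; rewrite mem_iota => range_j /=.
by rewrite (pvtx_face_arrow d) inordK //; lia.
Qed.

Lemma blocks_nonempty T (f : nat -> T) m r : m + r <= k.+1 ->
  all (fun s => 0 < size s) (map (map f) (map block (iota m r))).
Proof.
move=> le_mrk; rewrite -map_comp all_map; apply/allP => j; rewrite mem_iota => range_j.
by rewrite /= size_map block_nonempty //; lia.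
Qed.

Lemma prodV_face v : prodV a (faceV sigma x v) = prodV face_arrow v.
Proof.
pose d := pvtx a x ord0.
rewrite (prodV_iota _ d) (prodV_iota _ d) -flatten_all_blocks map_flatten.
rewrite -(vprod_flatten d) ?size_map ?size_iota ?blocks_nonempty //.
by rewrite (map_pvtx_face_arrow d).
Qed.

Lemma prodA_face e : prodA a (faceA sigma x e) = prodA face_arrow e.
Proof.
pose d := pvtx a x ord0; have le_ik : e.1 <= k by rewrite -ltnS.
rewrite !prodA_iota (src_faceA sigma_inj) [(faceA _ _ _).1]/=.
have le_left : 0 + e.1 <= k.+1 by lia.
have le_right : e.1.+1 + (k - e.1) <= k.+1 by lia.
rewrite (map_pvtx_face_arrow d _ le_left) (map_pvtx_face_arrow d _ le_right).
rewrite (face_arrowE (src e)) muAs_flatten ?blocks_nonempty //.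
rewrite -!map_flatten -!map_cat (flatten_blocks le_left) (flatten_blocks le_right).
have -> : e.1.+1 + (k - e.1) = k.+1 by lia.
by rewrite add0n block_start0 subn0 iota_fixed_before iota_fixed_after // sigma_natE.
Qed.

End ProductFace.
End Blocks.

Theorem mainTheorem4 (Q : mgraph) (n k : nat) (c : cube Q n)
    (hc : is_product_cube c)
    (sigma : 'I_k.+1 -> 'I_n.+1)
    (hsigma : forall i j : 'I_k.+1, (i < j)%N -> (sigma i < sigma j)%N)
    (x : {ffun 'I_n.+1 -> bool}) :
  is_product_cube_maps (restrV c sigma x) (restrA c sigma x).
Proof.
have [a [cV cA]] := hc.
exists (face_arrow sigma a x); split=> [v|e].
- by rewrite /restrV cV (prodV_face hsigma).
- by rewrite /restrA cA (prodA_face hsigma).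
Qed.
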